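(* Let $q$ be a prime power, $n\ge 2$ and $1\le i\le n$. Every root of $s_{n,i}(t)$ in an algebraic closure of $\mathbb{F}_q$ lies in $\mathbb{F}_{q^k}$ for some integer $k$ with $n-i+1\le k\le n$.
   Context: For a prime power $q$ and integers $n\ge 1$, $0\le i\le n$, the $i$-th $(n,q)$-elementary symmetric polynomial is $s_{n,i}(t)=\sum_{0\le j_1<j_2<\dots<j_i\le n-1} t^{q^{j_1}+q^{j_2}+\dots+q^{j_i}}\in\mathbb{F}_p[t]$ (where $p$ is the characteristic of $\mathbb{F}_q$). By convention $s_{n,0}(t)=1$. *)

From mathcomp Require Import all_boot all_order all_algebra.
Set Implicit Arguments. Unset Strict Implicit. Unset Printing Implicit Defensive.
Import GRing.Theory.
Local Open Scope ring_scope.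

(* Index sets
   {j_1 < ... < j_i} are the i-element subsets S of 'I_n.  Since all its
   coefficients are (sums of) 1, over a ring of characteristic p this is the
   image of the polynomial of F_p[t] from the paper. *)
Definition qsym (R : nzRingType) (q n i : nat) : {poly R} :=
  \sum_(S : {set 'I_n} | #|S| == i) 'X^(\sum_(j in S) q ^ (val j))%N.

(* Let phi be the q-power Frobenius and P_m = prod_(j < m) (X - phi^j a).  Up to
   sign, the coefficient of X^(m-i) in P_m is s_(m,i)(a).  Since
   P_(m+1) = (X - a) P_m^phi and P_(m+1)^phi = P_m^phi (X - phi^(m+1) a), comparing
   the coefficients of X^(m-i) of these two factorisations gives
   (a - phi^(m+1) a) (P_m^phi)_(m-i) = 0.  So either phi^(m+1) a = a, or the
   coefficient of X^(m-i) of P_m vanishes and we recurse on (m, i - 1); the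
   recursion stops before i = 0 because P_m is monic. *)

From HB Require Import structures.
From mathcomp Require Import all_boot all_order all_algebra all_field.
Set Implicit Arguments. Unset Strict Implicit. Unset Printing Implicit Defensive.
Import GRing.Theory.
Local Open Scope ring_scope.

Lemma coef_prod_XsubC_nat (R : comNzRingType) (f : nat -> R) n i : (i <= n)%N ->
  (\prod_(0 <= j < n) ('X - (f j)%:P))`_(n - i) =
    (-1) ^+ i * \sum_(S : {set 'I_n} | #|S| == i) \prod_(j in S) f j.
Proof.
move=> le_in; pose fs := [seq f j | j <- index_iota 0 n].
have size_fs : size fs = n by rewrite size_map size_iota subn0.
rewrite -(big_map f xpredT (fun x => 'X - x%:P)) -/fs coef_prod_XsubC size_fs ?leq_subr //.
rewrite subKn //; congr (_ * _); apply: eq_bigr => S _; apply: eq_bigr => j _.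
by rewrite (nth_map 0%N) /index_iota subn0 ?size_iota // nth_iota.
Qed.

Lemma horner_qsym (R : comNzRingType) q n i (a : R) :
  (qsym R q n i).[a] = \sum_(S : {set 'I_n} | #|S| == i) \prod_(j in S) a ^+ (q ^ j).
Proof.
rewrite /qsym horner_sum; apply: eq_bigr => S _.
by rewrite hornerXn expr_sum.
Qed.

Section OrbitPolynomial.

Variables (L : fieldType) (phi : {rmorphism L -> L}) (a : L).

Definition orbit_poly m : {poly L} := \prod_(0 <= j < m) ('X - (iter j phi a)%:P).

Lemma orbit_polyS m : orbit_poly m.+1 = ('X - a%:P) * map_poly phi (orbit_poly m).
Proof.
rewrite /orbit_poly big_nat_recl // rmorph_prod; congr (_ * _).
by apply: eq_bigr => j _; rewrite /= map_polyXsubC.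
Qed.

Lemma map_orbit_polyS m :
  map_poly phi (orbit_poly m.+1) = map_poly phi (orbit_poly m) * ('X - (iter m.+1 phi a)%:P).
Proof. by rewrite /orbit_poly big_nat_recr // rmorphM /= map_polyXsubC. Qed.

Lemma coef_orbit_poly_size m : (orbit_poly m)`_m = 1.
Proof.
have /monicP <- := monic_prod_XsubC (index_iota 0 m) xpredT (fun j => iter j phi a).
by rewrite lead_coefE size_prod_XsubC size_iota subn0.
Qed.

Lemma coef_orbit_polyS_eq0 m i : (orbit_poly m.+1)`_(m - i) = 0 ->
  iter m.+1 phi a = a \/ (orbit_poly m)`_(m - i) = 0.
Proof.
set Q := map_poly phi (orbit_poly m) => coef0.
have coef0_map : (map_poly phi (orbit_poly m.+1))`_(m - i) = 0.
  by rewrite coef_map /= coef0 rmorph0.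
move: coef0 coef0_map; rewrite map_orbit_polyS orbit_polyS -/Q.
rewrite mulrBl mulrBr !coefB coefXM coefMX coefCM coefMC.
move=> /subr0_eq coef0 /subr0_eq coef0_map.
have : (a - iter m.+1 phi a) * Q`_(m - i) = 0.
  by rewrite mulrBl -coef0 (mulrC (iter _ _ _)) -coef0_map subrr.
move/eqP; rewrite mulf_eq0 subr_eq0 coef_map fmorph_eq0.
by case/orP=> /eqP; [left | right].
Qed.

Lemma coef_orbit_poly_eq0 m i : (1 <= i <= m)%N -> (orbit_poly m)`_(m - i) = 0 ->
  exists k : nat, (m - i + 1 <= k <= m)%N /\ iter k phi a = a.
Proof.
elim: i m => [|i IH] m; first by case/andP.
case: m => [|m] /andP[_ le_im] //; rewrite subSS.
case/coef_orbit_polyS_eq0 => [fix_a | coef0].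
  by exists m.+1; rewrite addn1 ltnS leq_subr leqnn.
case: i IH le_im coef0 => [|i] IH le_im coef0.
  by move: coef0; rewrite subn0 coef_orbit_poly_size => /eqP; rewrite oner_eq0.
have [k [/andP[lb_k ub_k] fix_a]] := IH m le_im coef0.
by exists k; rewrite lb_k (leqW ub_k).
Qed.

End OrbitPolynomial.

Section PowerFrobenius.

Variables (L : fieldType) (q : nat).
Hypothesis pchar_q : [pchar L].-nat q.

Definition qFrobenius (x : L) := x ^+ q.

Lemma qFrobenius_is_nmod_morphism : nmod_morphism qFrobenius.
Proof.
split=> [|x y]; rewrite /qFrobenius ?(exprDn_pchar _ _ pchar_q) //.
by rewrite expr0n; case: q pchar_q.
Qed.

Lemma qFrobenius_is_monoid_morphism : monoid_morphism qFrobenius.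
Proof. by split=> [|x y]; rewrite /qFrobenius ?expr1n ?exprMn. Qed.

HB.instance Definition _ :=
  GRing.isNmodMorphism.Build L L qFrobenius qFrobenius_is_nmod_morphism.
HB.instance Definition _ :=
  GRing.isMonoidMorphism.Build L L qFrobenius qFrobenius_is_monoid_morphism.

Definition qFrobenius_rmorphism : {rmorphism L -> L} := qFrobenius.

Lemma iter_qFrobenius k x : iter k qFrobenius x = x ^+ (q ^ k).
Proof. by elim: k => [|k IH]; rewrite ?expr1 //= IH /qFrobenius -exprM expnSr. Qed.

End PowerFrobenius.

Theorem lemma3p9 (p e : nat) (L : closedFieldType) (n i : nat) (a : L) :
  prime p -> (0 < e)%N -> p \in [pchar L] ->
  (2 <= n)%N -> (1 <= i <= n)%N ->
  root (qsym L (p ^ e) n i) a ->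
  exists k : nat, (n - i + 1 <= k <= n)%N /\ a ^+ ((p ^ e) ^ k) = a.
Proof.
move=> prime_p _ pchar_p _ range_i /rootP qsym_a0.
have pchar_q : [pchar L].-nat (p ^ e)%N by rewrite pnatX (pnatE _ prime_p) pchar_p.
pose phi := qFrobenius_rmorphism pchar_q.
have coef0 : (orbit_poly phi a n)`_(n - i) = 0.
  rewrite coef_prod_XsubC_nat; last by case/andP: range_i.
  under eq_bigr => S _ do under eq_bigr => j _ do rewrite iter_qFrobenius.
  by rewrite -horner_qsym qsym_a0 mulr0.
have [k [range_k fix_a]] := coef_orbit_poly_eq0 range_i coef0.
by exists k; rewrite -iter_qFrobenius.
Qed.
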